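(* For every $k\ge 1$ and every $g\in G_k$, we have $g^2\in G_k'$.
   Context: $G_k$ is the subgroup of the automorphism group $B_k\cong\wr_{i=1}^kC_2$ of the binary rooted tree of depth $k$ consisting of automorphisms acting by even permutations on the $2^k$ leaves; $G_k\cong\mathrm{Syl}_2(A_{2^k})$. $G_k'$ is its commutator subgroup. *)

From mathcomp Require Import all_boot all_fingroup all_solvable alt.
Set Implicit Arguments. Unset Strict Implicit. Unset Printing Implicit Defensive.

(* Leaves of the binary rooted tree of depth k: binary words of length k.
   A vertex at level j is a word of length j; the vertices of the tree are the
   prefixes [take j x] of leaves x.  A tree automorphism is determined by its
   (faithful) action on the leaves, and a permutation s of the leaves comes
   from a tree automorphism iff for every level j it preserves the relation
   "having the same ancestor at level j", i.e. take j x = take j y. *)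
Definition leaf (k : nat) := (k.-tuple bool).

Definition Bk (k : nat) : {set {perm leaf k}} :=
  [set s : {perm leaf k} | [forall x : leaf k, forall y : leaf k,
     forall j : 'I_k.+1,
       (take j x == take j y) == (take j (s x) == take j (s y))]].

Local Open Scope group_scope.
Definition Gk (k : nat) : {set {perm leaf k}} := Bk k :&: 'Alt_(leaf k).

From mathcomp Require Import all_boot all_fingroup all_solvable alt.
Set Implicit Arguments. Unset Strict Implicit. Unset Printing Implicit Defensive.
Local Open Scope group_scope.

(* Modulo the derived subgroup squaring is multiplicative, so the elements of
   G_k whose square lies in G_k' form a subgroup, and it suffices that G_k is
   generated by its involutions.  If g in G_k fixes every vertex of level j,
   let f swap the two children of exactly those level-j vertices whose
   children g swaps: f is an involution of B_k and f g fixes level j + 1.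
   For j + 1 < k, f is even, being the product of its restrictions to the
   leaves whose bit j + 1 is 0 and 1, which are conjugate; for j + 1 = k we
   get f g = 1, so f = g^-1 is even as well.  Hence g = f (f g) and, by
   downward induction on j, every element of G_k is a product of involutions
   of G_k. *)

Lemma expg2M (gT : finGroupType) (x y : gT) :
  (x * y) ^+ 2 = x ^+ 2 * y ^+ 2 * [~ y, x] ^ y.
Proof. by rewrite /commg /conjg !expgS !expg0 !mulg1 !mulgA !mulgK. Qed.

Lemma gen_involutions_expg2_der1 (gT : finGroupType) (A : {set gT}) :
  {in A, forall t, t ^+ 2 = 1} -> {in <<A>>, forall g, g ^+ 2 \in [~: <<A>>, <<A>>]}.
Proof.
move=> A_inv.
pose S := [set g in <<A>> | g ^+ 2 \in [~: <<A>>, <<A>>]].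
have S_group : group_set S.
  apply/group_setP; split=> [|x y]; first by rewrite inE group1 expg1n group1.
  rewrite !inE => /andP[Ax x2] /andP[Ay y2].
  rewrite (groupM Ax Ay) /= expg2M; apply: groupM; first exact: groupM x2 y2.
  by rewrite conjRg mem_commg ?groupJ.
have sAS : <<A>> \subset Group S_group.
  by rewrite gen_subG; apply/subsetP=> t At; rewrite inE mem_gen //= A_inv // group1.
by move=> g /(subsetP sAS); rewrite inE => /andP[].
Qed.

Section BinaryTree.
Variable k : nat.
Implicit Types (x y z : leaf k) (g s t : {perm leaf k}) (P : pred (leaf k)).

Definition agree j x y := forall m, m < j -> nth false x m = nth false y m.

Lemma agreeP j x y : reflect (agree j x y) (take j x == take j y).
Proof.
apply: (iffP eqP) => [E m lt_mj | A].
  by rewrite -(nth_take _ lt_mj) E nth_take.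
apply: (@eq_from_nth _ false) => [|m]; first by rewrite !size_take !size_tuple.
rewrite size_take size_tuple => lt_m.
have /andP[lt_mj _] : (m < j) && (m < k) by rewrite -leq_min.
by rewrite !nth_take // A.
Qed.

Lemma agree_leaf_eq x y : agree k x y -> x = y.
Proof.
move=> A; apply/val_inj/(@eq_from_nth _ false); first by rewrite !size_tuple.
by move=> m; rewrite size_tuple => /A.
Qed.

Lemma agreeS j x y : agree j.+1 x y <-> agree j x y /\ nth false x j = nth false y j.
Proof.
split=> [A | [A E] m]; first by split=> [m /ltnW|]; apply: A.
by rewrite ltnS leq_eqVlt => /orP[/eqP-> | /A].
Qed.

Lemma agree_le i j x y : i <= j -> agree j x y -> agree i x y.
Proof. by move=> le_ij A m /leq_trans/(_ le_ij)/A. Qed.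

Lemma agree_trans j x y z : agree j x y -> agree j y z -> agree j x z.
Proof. by move=> Axy Ayz m lt_mj; rewrite Axy ?Ayz. Qed.

Lemma agree_sym j x y : agree j x y -> agree j y x.
Proof. by move=> A m /A. Qed.

Lemma BkP s :
  reflect (forall j, j <= k -> forall x y, agree j x y <-> agree j (s x) (s y))
          (s \in Bk k).
Proof.
rewrite inE; apply: (iffP forallP) => [s_Bk j le_jk x y | s_agree x].
  have /forallP/(_ (Ordinal (le_jk : j < k.+1)))/eqP /= E := forallP (s_Bk x) y.
  by split=> /agreeP A; apply/agreeP; [rewrite -E | rewrite E].
apply/forallP=> y; apply/forallP=> j; apply/eqP.
have [to from] := s_agree j (ltn_ord j) x y.
by apply/agreeP/agreeP; [exact: to | exact: from].
Qed.

Lemma Bk_group_set : group_set (Bk k).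
Proof.
apply/group_setP; split=> [|s t /BkP s_Bk /BkP t_Bk]; apply/BkP=> j le_jk x y.
  by rewrite !perm1.
rewrite !permM; exact: iff_trans (s_Bk j le_jk x y) (t_Bk j le_jk (s x) (s y)).
Qed.

Canonical Bk_group := Group Bk_group_set.
Canonical Gk_group := [group of Gk k].

Definition toggle (i : 'I_k) x : leaf k := [tuple (j == i) (+) tnth x j | j < k].

Lemma nth_toggle i x m : nth false (toggle i x) m = (m == i) (+) nth false x m.
Proof.
case: (ltnP m k) => [lt_mk | le_km].
  by rewrite -[m]/(nat_of_ord (Ordinal lt_mk)) nth_mktuple (tnth_nth false).
rewrite !nth_default ?size_tuple //.
by case: eqP => // def_m; move: (ltn_ord i); rewrite -def_m ltnNge le_km.
Qed.

Lemma toggleK i : involutive (toggle i).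
Proof. by move=> x; apply: agree_leaf_eq => m _; rewrite !nth_toggle addbA addbb. Qed.

Lemma agree_toggle (i : 'I_k) x : agree i (toggle i x) x.
Proof. by move=> m lt_mi; rewrite nth_toggle (ltn_eqF lt_mi). Qed.

Definition prefix_pred j P := forall x y, agree j x y -> P x = P y.

(* The guard [P (toggle i x)] makes [flip_fun i P] an involution for every [P];
   it is vacuous when [P] depends only on the ancestor at level [i]. *)
Definition flip_fun i P x := if P x && P (toggle i x) then toggle i x else x.

Lemma flip_funK i P : involutive (flip_fun i P).
Proof.
move=> x; rewrite /flip_fun.
by case Px: (P x); case Ptx: (P (toggle i x)); rewrite /= ?toggleK ?Px ?Ptx.
Qed.

Definition flip i P : {perm leaf k} := perm (can_inj (flip_funK i P)).

Lemma flipE i P x : flip i P x = flip_fun i P x.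
Proof. by rewrite permE. Qed.

Lemma flip_sqr i P : flip i P ^+ 2 = 1.
Proof. by apply/permP=> x; rewrite expgS expg1 permM !flipE flip_funK perm1. Qed.

Lemma agree_flip (i : 'I_k) P x : agree i (flip i P x) x.
Proof. by rewrite flipE /flip_fun; case: ifP => _; [exact: agree_toggle | move=> m]. Qed.

Lemma nth_flip i P x m : P (toggle i x) = P x ->
  nth false (flip i P x) m = ((m == i) && P x) (+) nth false x m.
Proof.
move=> Ptx; rewrite flipE /flip_fun Ptx andbb.
by case: (P x); rewrite ?nth_toggle ?andbT ?andbF.
Qed.

Section LevelFlip.
Variables (i : 'I_k) (P : pred (leaf k)).
Hypothesis P_prefix : prefix_pred i P.

Let P_toggle x : P (toggle i x) = P x := P_prefix (agree_toggle x).

Lemma flip_Bk : flip i P \in Bk k.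
Proof.
have flip_agree j x y : agree j x y -> agree j (flip i P x) (flip i P y).
  move=> A m lt_mj; rewrite !nth_flip ?P_toggle // A //.
  by case: eqP => // def_m; rewrite (P_prefix (agree_le _ A)) // -def_m ltnW.
apply/BkP=> j _ x y; split; first exact: flip_agree.
by move/flip_agree; rewrite !flipE !flip_funK.
Qed.

(* [flip i P] is the product of its restrictions to the leaves with bit [l]
   equal to 0 and to 1, which are conjugate by toggling bit [l]. *)
Lemma flip_Alt (l : 'I_k) : i < l -> flip i P \in 'Alt_(leaf k).
Proof.
move=> lt_il; rewrite Alt_even.
pose P0 x := P x && ~~ nth false x l.
pose P1 x := P x && nth false x l.
pose c := flip l predT.
have bit_l_toggle x : nth false (toggle i x) l = nth false x l.
  by rewrite nth_toggle (gtn_eqF lt_il).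
have P0_toggle x : P0 (toggle i x) = P0 x by rewrite /P0 P_toggle bit_l_toggle.
have P1_toggle x : P1 (toggle i x) = P1 x by rewrite /P1 P_toggle bit_l_toggle.
have nth_c x m : nth false (c x) m = (m == l) (+) nth false x m.
  by rewrite nth_flip ?andbT.
have P_c x : P (c x) = P x.
  exact: P_prefix (agree_le (ltnW lt_il) (@agree_flip l predT x)).
have split_P : flip i P = flip i P0 * flip i P1.
  apply/permP=> x; rewrite permM; apply: agree_leaf_eq => m _.
  rewrite !nth_flip ?P0_toggle ?P1_toggle ?P_toggle // /P1.
  rewrite (P_prefix (agree_flip P0 x)) nth_flip ?P0_toggle // (gtn_eqF lt_il) /P0.
  by case: (m == i); case: (P x); case: (nth false x l).
have conj_P0 : flip i P1 = flip i P0 ^ c.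
  apply/permP=> x; have [y ->] : exists y, x = c y.
    by exists (c x); rewrite !flipE flip_funK.
  rewrite permJ; apply: agree_leaf_eq => m _.
  rewrite nth_flip ?P1_toggle // !nth_c nth_flip ?P0_toggle // /P1 P_c nth_c eqxx /P0.
  by case: (m == i); case: (m == l); case: (P y); case: (nth false y l).
by rewrite split_P conj_P0 odd_permM odd_permJ addbb.
Qed.

End LevelFlip.

Definition fixes_prefix j g := forall x, agree j (g x) x.

Definition moves_bit g j x := nth false (g x) j != nth false x j.

Lemma fixes_prefix_eq1 g : fixes_prefix k g -> g = 1.
Proof. by move=> g_fix; apply/permP=> x; rewrite perm1; exact: agree_leaf_eq. Qed.

Lemma moves_bit_prefix g (i : 'I_k) :
  g \in Bk k -> fixes_prefix i g -> prefix_pred i (moves_bit g i).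
Proof.
move=> /BkP g_Bk g_fix x y A.
have Ag : agree i (g x) (g y).
  exact: agree_trans (g_fix x) (agree_trans A (agree_sym (g_fix y))).
have g_bit : (nth false x i == nth false y i) = (nth false (g x) i == nth false (g y) i).
  have [to from] := g_Bk i.+1 (ltn_ord i) x y.
  apply/eqP/eqP=> E.
    by have /to/agreeS[_ ->] : agree i.+1 x y by apply/agreeS.
  by have /from/agreeS[_ ->] : agree i.+1 (g x) (g y) by apply/agreeS.
move: g_bit; rewrite /moves_bit.
by case: (nth false x i); case: (nth false y i);
   case: (nth false (g x) i); case: (nth false (g y) i).
Qed.

Lemma fixes_prefix_flip g (i : 'I_k) : g \in Bk k -> fixes_prefix i g ->
  fixes_prefix i.+1 (flip i (moves_bit g i) * g).
Proof.
move=> g_Bk g_fix x; rewrite permM.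
have M_prefix := moves_bit_prefix g_Bk g_fix.
set y := flip i _ x.
have Ayx : agree i y x := agree_flip _ x.
apply/agreeS; split; first exact: agree_trans (g_fix y) Ayx.
have y_i : nth false y i = moves_bit g i x (+) nth false x i.
  by rewrite nth_flip ?eqxx // (M_prefix _ _ (agree_toggle x)).
have := M_prefix _ _ Ayx; rewrite {1}/moves_bit y_i.
by case: (moves_bit g i x); case: (nth false (g y) i); case: (nth false x i).
Qed.

Definition Gk_involutions := [set t in Gk k | t ^+ 2 == 1].

Lemma flip_moves_bit_involution g (i : 'I_k) : g \in Gk k -> fixes_prefix i g ->
  flip i (moves_bit g i) \in Gk_involutions.
Proof.
move=> /setIP[g_Bk g_Alt] g_fix; set f := flip i _.
have M_prefix := moves_bit_prefix g_Bk g_fix.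
rewrite inE /Gk in_setI flip_Bk // flip_sqr eqxx andbT /=.
case: (ltnP i.+1 k) => [lt_ik | le_ki].
  exact: (flip_Alt M_prefix (l := Ordinal lt_ik)).
have def_k : i.+1 = k by apply/eqP; rewrite eqn_leq ltn_ord.
have /fixes_prefix_eq1 fg1 : fixes_prefix k (f * g).
  by have := fixes_prefix_flip g_Bk g_fix; rewrite def_k.
have -> : f = g^-1 by rewrite -[f]mulg1 -(mulgV g) mulgA fg1 mul1g.
by rewrite groupV.
Qed.

Lemma fixes_prefix_mem_gen j g :
  j <= k -> g \in Gk k -> fixes_prefix j g -> g \in <<Gk_involutions>>.
Proof.
move=> le_jk; rewrite -(subKn le_jk).
elim: (k - j) (leq_subr j k) g => [_ g _ | n IH lt_nk g Gg g_fix].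
  by rewrite subn0 => /fixes_prefix_eq1->; exact: group1.
have lt_ik : k - n.+1 < k by rewrite ltn_subrL (leq_trans _ lt_nk).
pose i := Ordinal lt_ik; pose f := flip i (moves_bit g i).
have f_inv : f \in Gk_involutions := flip_moves_bit_involution (i := i) Gg g_fix.
have fg : f * g \in <<Gk_involutions>>.
  apply: (IH (ltnW lt_nk)); first by case/setIdP: f_inv => Gf _; rewrite groupM.
  by rewrite -subnSK //; apply: (fixes_prefix_flip (i := i)) => //; case/setIP: Gg.
by rewrite -(mulKg f g) groupM ?groupV // mem_gen.
Qed.

Lemma Gk_involutions_gen : <<Gk_involutions>> = Gk k.
Proof.
apply/eqP; rewrite eqEsubset gen_subG; apply/andP; split.
  by apply/subsetP=> t; rewrite inE => /andP[].
by apply/subsetP=> g Gg; apply: fixes_prefix_mem_gen (leq0n k) Gg _ => x m.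
Qed.

End BinaryTree.

Theorem proposition15 (k : nat) : 1 <= k ->
  forall g : {perm leaf k}, g \in Gk k -> (g ^+ 2)%g \in ([~: Gk k, Gk k])%g.
Proof.
move=> _ g; rewrite -Gk_involutions_gen; apply: gen_involutions_expg2_der1.
by move=> t; rewrite inE => /andP[_ /eqP].
Qed.
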